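(* Let $r_1,\dots,r_k$ be positive integers, let $\Omega_1,\dots,\Omega_k$ be pairwise disjoint non-empty finite sets, and for each $i$ let $G_i\leq\mathrm{Sym}(\Omega_i)$ be a cyclic permutation group of order $r_i$. Then the internal direct product $G_1\cdot G_2\cdots G_k$, acting on $\Omega_1\cup\cdots\cup\Omega_k$, has the EKR property.
   Context: The internal direct product consists of the products $g_1\cdots g_k$ with $g_i\in G_i$, multiplied componentwise, acting on $\Omega=\bigcup\Omega_i$ by $x^{g_1\cdots g_k}=x^{g_i}$ for $x\in\Omega_i$. Two elements $\pi,\tau$ of a permutation group intersect if $\pi\tau^{-1}$ has a fixed point; a subset is intersecting if every pair intersects; the group has the EKR property if every intersecting subset has size at most the size of the largest point-stabilizer. *)

From mathcomp Require Import all_boot all_fingroup all_solvable.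
Set Implicit Arguments. Unset Strict Implicit. Unset Printing Implicit Defensive.

Section EKR.
Variable T : finType.

Definition perm_intersect (p q : {perm T}) : bool :=
  [exists x, (p * q^-1)%g x == x].

Definition intersecting (S : {set {perm T}}) : bool :=
  [forall p in S, forall q in S, perm_intersect p q].

Definition point_stab (G : {set {perm T}}) (x : T) : {set {perm T}} :=
  [set g in G | g x == x].

Definition EKR_property (G : {set {perm T}}) : Prop :=
  forall S : {set {perm T}}, S \subset G -> intersecting S ->
    #|S| <= \max_(x : T) #|point_stab G x|.
End EKR.

From mathcomp Require Import all_boot all_fingroup all_solvable.
Set Implicit Arguments. Unset Strict Implicit. Unset Printing Implicit Defensive.
Local Open Scope group_scope.

(* Let c_i generate G_i and d := c_1 ... c_k.  On each Omega_i the element d acts as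
   c_i, so the orbits of <d> are those of the whole product P.  Let m be the least
   orbit length, attained at x0.  No d^t with 0 < t < m fixes a point, so the
   translates d^-t S (t < m) of an intersecting S are pairwise disjoint subsets
   of P, whence m |S| <= |P| = |x0^P| |P_x0| = m |P_x0|. *)

Section IntersectingBound.
Variable T : finType.

Lemma intersecting_clique_bound (G : {group {perm T}}) m (c : 'I_m -> {perm T})
    (S : {set {perm T}}) :
  (forall i, c i \in G) ->
  (forall i j, i != j -> ~~ perm_intersect (c i) (c j)) ->
  S \subset G -> intersecting S -> m * #|S| <= #|G|.
Proof.
move=> cG clique_c sSG /forall_inP intS.
pose f (p : 'I_m * {perm T}) := (c p.1)^-1 * p.2.
have inj_f : {in setX [set: 'I_m] S &, injective f}.
  move=> [i s] [j s'] /setXP[_ Ss] /setXP[_ Ss']; rewrite /f /= => eq_f.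
  have def_s' : s' = c j * (c i)^-1 * s by rewrite -mulgA eq_f mulKVg.
  suff eq_ij : i = j by move: eq_f; rewrite eq_ij => /mulgI->.
  apply/eqP; apply: contraTT (forall_inP (intS s' Ss') s Ss) => ne_ij.
  by rewrite /perm_intersect def_s' mulgK; apply: clique_c; rewrite eq_sym.
rewrite -[m]card_ord -cardsT -cardsX -(card_in_imset inj_f) subset_leq_card //.
apply/subsetP => _ /imsetP[[i s] /setXP[_ Ss] ->].
by rewrite groupM ?groupV ?cG ?(subsetP sSG).
Qed.

Lemma porbit_expg_inj (s : {perm T}) x :
  {in gtn #|porbit s x| &, injective (fun i => (s ^+ i) x)}.
Proof.
move=> i j lt_i lt_j /= eq_ij.
have := uniq_traject_porbit s x; move/nth_uniq => inj_nth.
apply/eqP; rewrite -(inj_nth x) ?size_traject //.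
by rewrite !nth_traject // -!permX eq_ij.
Qed.

Lemma perm_intersect_expg (s : {perm T}) i j :
  perm_intersect (s ^+ i) (s ^+ j) = [exists x, (s ^+ i) x == (s ^+ j) x].
Proof.
rewrite /perm_intersect; apply: eq_existsb => x; rewrite permM.
by apply/eqP/eqP => [E | ->]; rewrite ?permK // -{2}E permKV.
Qed.

Lemma EKR_porbit (G : {group {perm T}}) d :
  d \in G -> (forall x, orbit 'P G x \subset porbit d x) -> EKR_property G.
Proof.
move=> dG orbitG S sSG intS.
have [-> | [s Ss]] := set_0Vmem S; first by rewrite cards0.
have /existsP[y _] := forall_inP (forall_inP intS s Ss) s Ss.
have [x0 _ min_x0] := @arg_minnP T y predT (fun x => #|porbit d x|) isT.
set m := #|porbit d x0| in min_x0.
have m_gt0 : 0 < m by rewrite lt0n card_porbit_neq0.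
have clique : forall i j : 'I_m, i != j -> ~~ perm_intersect (d ^+ i) (d ^+ j).
  move=> i j; apply: contraNN; rewrite perm_intersect_expg => /existsP[x /eqP].
  move=> eq_x; apply/eqP/val_inj; apply: (porbit_expg_inj _ _ eq_x).
    exact: leq_trans (ltn_ord i) (min_x0 x isT).
  exact: leq_trans (ltn_ord j) (min_x0 x isT).
rewrite -(leq_pmul2l m_gt0).
apply: leq_trans (intersecting_clique_bound (fun i => groupX i dG) clique sSG intS) _.
rewrite -(card_orbit_stab 'P G x0) leq_mul ?subset_leq_card //.
have -> : 'C_G[x0 | 'P] = point_stab G x0 by apply/setP => g; rewrite !inE sub1set inE.
exact: (leq_bigmax (F := fun x => #|point_stab G x|) x0).
Qed.
End IntersectingBound.

Section DisjointSupports.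
Variable T : finType.

Lemma perm_on_disjoint_commute (A B : {set T}) (a b : {perm T}) :
  [disjoint A & B] -> perm_on A a -> perm_on B b -> commute a b.
Proof.
move=> dAB onA onB; apply/permP => x; rewrite !permM.
have [xA | xNA] := boolP (x \in A).
  have xNB : x \notin B by rewrite (disjointFr dAB xA).
  have axNB : a x \notin B by rewrite (disjointFr dAB) ?(perm_closed _ onA).
  by rewrite (out_perm onB xNB) (out_perm onB axNB).
have [xB | xNB] := boolP (x \in B); last by rewrite !(out_perm onA, out_perm onB).
have bxNA : b x \notin A by rewrite (disjointFl dAB) ?(perm_closed _ onB).
by rewrite (out_perm onA xNA) (out_perm onA bxNA).
Qed.

Lemma eq_in_expg (A : {set T}) (p q : {perm T}) n :
  perm_on A q -> {in A, p =1 q} -> {in A, p ^+ n =1 q ^+ n}.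
Proof.
move=> onA eq_pq x xA; elim: n => [|n IHn]; first by rewrite !expg0.
have qnxA : (q ^+ n) x \in A.
  by elim: n {IHn} => [|n IHn]; rewrite ?expg0 ?perm1 // expgSr permM perm_closed.
by rewrite !expgSr !permM IHn eq_pq.
Qed.

Variables (k : nat) (Omega : 'I_k -> {set T}).
Hypothesis Omega_disj : forall i j, i != j -> [disjoint Omega i & Omega j].

Lemma big_perm_on_disjoint (c : 'I_k -> {perm T}) i r :
  (forall j, perm_on (Omega j) (c j)) ->
  {in Omega i, \prod_(j <- r) c j =1 c i ^+ count_mem i r}.
Proof.
move=> onc; elim: r => [|j r IHr] x xi; first by rewrite big_nil expg0.
rewrite big_cons permM /=; have [-> | nji] := eqVneq j i.
  by rewrite IHr ?(perm_closed _ (onc i)) // add1n expgS permM.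
by rewrite (out_perm (onc j)) ?IHr // (disjointFl (Omega_disj nji) xi).
Qed.

Variable G : 'I_k -> {group {perm T}}.
Hypothesis G_on : forall i g, g \in G i -> perm_on (Omega i) g.

Lemma prods_disjoint_supportsE :
  \prod_(i < k) (G i : {set {perm T}}) = (\prod_(i < k) G i)%G.
Proof.
apply/bigcprodW/eqP/bigcprodYP => i j _ _ nij; apply/centsP => a aGi b bGj.
exact: perm_on_disjoint_commute (Omega_disj nij) (G_on aGi) (G_on bGj).
Qed.

Lemma prods_disjoint_supports_restr a i :
  a \in \prod_(j < k) (G j : {set {perm T}}) ->
  exists2 g, g \in G i & {in Omega i, a =1 g}.
Proof.
pose restr (X : {set {perm T}}) := forall a, a \in X ->
  exists2 g, g \in G i & {in Omega i, a =1 g}.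
move: a; apply: (big_ind restr) => [a | X Y restrX restrY a | j _ a aGj].
- by rewrite inE => /eqP->; exists 1.
- case/mulsgP=> b c /restrX[g gGi eq_bg] /restrY[h hGi eq_ch] ->.
  exists (g * h); rewrite ?groupM // => x xi.
  by rewrite !permM eq_bg // eq_ch // (perm_closed _ (G_on gGi)).
have [<- | nji] := eqVneq j i; first by exists a.
exists 1 => // x xi; rewrite perm1 (out_perm (G_on aGj)) //.
by rewrite (disjointFl (Omega_disj nji) xi).
Qed.

Variable c : 'I_k -> {perm T}.
Hypothesis G_cycle : forall i, G i :=: <[c i]>.

Lemma orbit_prods_sub_porbit i x : x \in Omega i ->
  orbit 'P (\prod_(j < k) (G j : {set {perm T}})) x
    \subset porbit (\prod_(j < k) c j) x.
Proof.
move=> xi; apply/subsetP => _ /imsetP[a aP ->].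
have [g gGi eq_ag] := prods_disjoint_supports_restr i aP.
have c_on j : perm_on (Omega j) (c j) by apply: G_on; rewrite G_cycle cycle_id.
have eq_dc : {in Omega i, \prod_(j < k) c j =1 c i}.
  move=> y yi; rewrite (big_perm_on_disjoint _ c_on yi).
  by rewrite count_uniq_mem ?index_enum_uniq ?mem_index_enum.
move: gGi; rewrite G_cycle => /cycleP[n def_g].
by rewrite /= apermE eq_ag // def_g -(eq_in_expg n (c_on i) eq_dc) ?mem_porbit.
Qed.

End DisjointSupports.

Theorem corollary19 (T : finType) (k : nat) (r : 'I_k -> nat)
    (Omega : 'I_k -> {set T}) (G : 'I_k -> {group {perm T}}) :
  (forall i, 0 < r i) ->
  (forall i j, i != j -> [disjoint Omega i & Omega j]) ->
  (forall i, Omega i != set0) ->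
  \bigcup_(i < k) Omega i = [set: T] ->
  (forall i g, g \in G i -> perm_on (Omega i) g) ->
  (forall i, cyclic (G i)) ->
  (forall i, #|G i| = r i) ->
  EKR_property (\prod_(i < k) (G i : {set {perm T}}))%g.
Proof.
move=> _ Omega_disj _ Omega_cover G_on G_cyclic _.
have [c G_cycle] := fin_all_exists (fun i => cyclicP (G_cyclic i)).
have defP := prods_disjoint_supportsE Omega_disj G_on.
rewrite defP; apply: (EKR_porbit (d := \prod_(i < k) c i)); rewrite -defP.
  by apply: mem_prodg => i _; rewrite G_cycle cycle_id.
move=> x; have /bigcupP[i _ xi] : x \in \bigcup_(i < k) Omega i by rewrite Omega_cover.
by rewrite (orbit_prods_sub_porbit Omega_disj G_on G_cycle xi).
Qed.
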